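(* The groups $\left\{\begin{bmatrix}a&b\\0&1\end{bmatrix}: a,b\in\mathbb{R},\ a\neq0\right\}$ (i.e. $\mathbb{R}^*\ltimes\mathbb{R}$) and $\left\{\begin{bmatrix}a&b\\0&1\end{bmatrix}: a,b\in\mathbb{R},\ a>0\right\}$ (i.e. $\mathbb{R}\ltimes\mathbb{R}$), with their usual Lie group structures, have the topological $R_\infty$-property.
   Context: For an automorphism $\varphi$ of a group $G$, the $\varphi$-twisted conjugacy classes are the equivalence classes of the relation $x\sim_\varphi y$ iff $y=gx\varphi(g)^{-1}$ for some $g\in G$; $R(\varphi)\in\mathbb{N}\cup\{\infty\}$ is their number. A topological group $G$ has the topological $R_\infty$-property if $R(\varphi)=\infty$ for every automorphism $\varphi$ of $G$ that is a homeomorphism (for a Lie group: every continuous automorphism). *)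

From HB Require Import structures.
From mathcomp Require Import all_boot all_order all_algebra.
From mathcomp Require Import all_classical all_reals topology normedtype.
Set Implicit Arguments. Unset Strict Implicit. Unset Printing Implicit Defensive.
Import Order.TTheory GRing.Theory Num.Theory.
Import numFieldNormedType.Exports.
Local Open Scope classical_set_scope.
Local Open Scope ring_scope.

(* The matrix [[a, b], [0, 1]] is encoded as the pair (a, b) in R * R,
   a subset of R^2 carrying the subspace (= usual Lie group) topology. *)
Section AffineGroups.
Variable R : realType.

(* matrix product [[a,b],[0,1]] * [[c,d],[0,1]] = [[ac, ad+b],[0,1]] *)
Definition affmul (p q : R * R) : R * R := (p.1 * q.1, p.1 * q.2 + p.2).
(* matrix inverse [[a,b],[0,1]]^-1 = [[a^-1, -b/a],[0,1]] *)
Definition affinv (p : R * R) : R * R := (p.1^-1, - (p.2 / p.1)).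

Definition aff_full : set (R * R) := [set p | p.1 != 0].
Definition aff_pos : set (R * R) := [set p | 0 < p.1].

Definition top_automorphism (S : set (R * R)) (phi : R * R -> R * R) : Prop :=
  (forall x, S x -> S (phi x)) /\
  (forall x y, S x -> S y -> phi (affmul x y) = affmul (phi x) (phi y)) /\
  {within S, continuous phi} /\
  exists psi : R * R -> R * R,
    (forall x, S x -> S (psi x)) /\
    (forall x, S x -> psi (phi x) = x) /\
    (forall x, S x -> phi (psi x) = x) /\
    {within S, continuous psi}.

Definition twisted_rel (S : set (R * R)) (phi : R * R -> R * R) (x y : R * R) :=
  exists2 g, S g & y = affmul (affmul g x) (affinv (phi g)).

Definition twisted_classes (S : set (R * R)) (phi : R * R -> R * R)
  : set (set (R * R)) :=
  [set [set y | S y /\ twisted_rel S phi x y] | x in S].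

Definition top_R_infty (S : set (R * R)) : Prop :=
  forall phi, top_automorphism S phi -> infinite_set (twisted_classes S phi).

End AffineGroups.

(* An automorphism phi of an affine group {(a, b)} (with a ranging over R^* or
   R_{>0}) maps the normal subgroup of translations (1, b) to itself, so
   phi (1, b) = (1, mu b) with mu additive, and mu (a b) = f a * mu b where
   f a = (phi (a, 0)).1 is multiplicative. Hence b |-> mu b / mu 1 is additive,
   agrees with f, and is positive on positive reals (f of a square is a square):
   it is the identity, so f = id and phi preserves the diagonal entry a.
   Twisted conjugation g x phi(g)^-1 then preserves a, so the points (n, 0)
   lie in pairwise distinct twisted classes. *)

From mathcomp Require Import all_boot all_order all_algebra.
From mathcomp Require Import all_classical all_reals topology normedtype.
Import Order.TTheory GRing.Theory Num.Theory.
Local Open Scope classical_set_scope.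
Local Open Scope ring_scope.

Lemma additive_pos_eq_id (R : realType) (F : R -> R) :
  (forall x y, F (x + y) = F x + F y) -> F 1 = 1 ->
  (forall x, 0 < x -> 0 < F x) -> forall x, F x = x.
Proof.
move=> FD F1 Fpos.
have F0 : F 0 = 0 by apply: (addrI (F 0)); rewrite -FD !addr0.
have FN x : F (- x) = - F x by apply/eqP; rewrite -subr_eq0 opprK -FD addNr F0.
have F_mono x y : x < y -> F x < F y.
  by move=> lt_xy; rewrite -subr_gt0 -FN -FD Fpos // subr_gt0.
have Fn (n : nat) : F n%:R = n%:R.
  by elim: n => [|n IHn]; rewrite ?F0 // -addn1 natrD FD IHn F1.
have Fz (z : int) : F z%:~R = z%:~R.
  by case: z => n; rewrite ?NegzE ?mulrNz ?FN -pmulrn Fn.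
have FMn x (n : nat) : F (x *+ n) = F x *+ n.
  by elim: n => [|n IHn]; rewrite ?mulr0n ?F0 // !mulrS FD IHn.
(* An integer z with k F x < z < k x gives z = F z < F (k x) = k F x < z. *)
have F_ge x : ~ F x < x.
  move=> lt_Fx; set d := x - F x.
  have d_gt0 : 0 < d by rewrite subr_gt0.
  have [k dk_gt1] : exists k : nat, 1 < d *+ k.
    exists (Num.bound d^-1); rewrite -mulr_natr -{1}(mulfV (lt0r_neq0 d_gt0)).
    by rewrite ltr_pM2l //; apply: archi_boundP; rewrite invr_ge0 ltW.
  set z := Num.floor (F x *+ k) + 1.
  have lt_Fxk_z : F x *+ k < z%:~R by apply: floorD1_gt.
  have lt_z_xk : z%:~R < x *+ k.
    rewrite /z intrD (le_lt_trans (lerD (floor_le _) (lexx _))) //.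
    by rewrite -ltrBrDl -mulrnBl.
  have := F_mono _ _ lt_z_xk; rewrite Fz FMn => lt_z_Fxk.
  by have := lt_trans lt_Fxk_z lt_z_Fxk; rewrite ltxx.
move=> x; case: (ltgtP (F x) x) => // lt_x; first by case: (F_ge x).
by case: (F_ge (- x)); rewrite FN ltrN2.
Qed.

Section AffineAutomorphism.
Variable R : realType.
Variable P : R -> Prop.
Hypothesis P_pos : forall a, 0 < a -> P a.
Hypothesis P_neq0 : forall a, P a -> a != 0.
Variable phi : R * R -> R * R.
Hypothesis phi_stable : forall x, P x.1 -> P (phi x).1.
Hypothesis phi_morph :
  forall x y, P x.1 -> P y.1 -> phi (affmul x y) = affmul (phi x) (phi y).
Hypothesis phi_inj : forall x y, P x.1 -> P y.1 -> phi x = phi y -> x = y.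

Let P1 : P 1. Proof. exact: P_pos. Qed.

Let phi_fst_neq0 x : P x.1 -> (phi x).1 != 0.
Proof. by move=> Px; apply/P_neq0/phi_stable. Qed.

Lemma aut_unit : phi (1, 0) = (1, 0).
Proof.
have := phi_morph (1, 0) (1, 0) P1 P1; rewrite /affmul /= mul1r mulr0 addr0.
have := phi_fst_neq0 (1, 0) P1.
case: (phi (1, 0)) => [p q] /= p_neq0 [pp qq].
have p1 : p = 1 by apply: (mulfI p_neq0); rewrite mulr1 -pp.
move: qq; rewrite p1 mul1r => qq.
by congr pair; apply: (addrI q); rewrite addr0 -qq.
Qed.

(* (1, 2b) = (2, 0) (1, b) (2, 0)^-1 and (1, 2b) = (1, b)^2 force the
   diagonal entry of phi (1, b) to be 1. *)
Lemma aut_transl_fst b : (phi (1, b)).1 = 1.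
Proof.
have P2 : P 2 by apply: P_pos.
have conj2 : affmul (2, 0) (1, b) = affmul (1, b + b) (2, 0).
  by rewrite /affmul /= mulr1 mul1r mulr0 add0r addr0 mulr2n mulrDl mul1r.
have sqr_b : affmul (1, b) (1, b) = (1, b + b) by rewrite /affmul /= mulr1 mul1r.
have := congr1 phi conj2; rewrite !phi_morph //= => /(congr1 fst) /=.
rewrite -sqr_b phi_morph //= mulrC => /(mulIf (phi_fst_neq0 (2, 0) P2)) e.
by apply: (mulfI (phi_fst_neq0 (1, b) P1)); rewrite mulr1 -e.
Qed.

Definition aut_transl b := (phi (1, b)).2.
Definition aut_diag a := (phi (a, 0)).1.

Lemma aut_translE b : phi (1, b) = (1, aut_transl b).
Proof.
by move: (aut_transl_fst b); rewrite /aut_transl; case: (phi (1, b)) => p q /= ->.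
Qed.

Lemma aut_translD b c : aut_transl (b + c) = aut_transl b + aut_transl c.
Proof.
have : affmul (1, b) (1, c) = (1, b + c) by rewrite /affmul /= mulr1 mul1r addrC.
move/(congr1 phi); rewrite phi_morph // !aut_translE /affmul /= mul1r => -[<-].
by rewrite mul1r addrC.
Qed.

Lemma aut_translM a b : P a -> aut_transl (a * b) = aut_diag a * aut_transl b.
Proof.
move=> Pa.
have : affmul (a, 0) (1, b) = affmul (1, a * b) (a, 0).
  by rewrite /affmul /= !mulr1 !mul1r addr0 add0r.
move/(congr1 phi); rewrite !phi_morph // !aut_translE /affmul /= /aut_diag.
case: (phi (a, 0)) => p q /= [] _; rewrite mul1r => e.
by apply: (addrI q); rewrite -e addrC.
Qed.

Lemma aut_diagM a c : P a -> P c -> aut_diag (a * c) = aut_diag a * aut_diag c.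
Proof.
move=> Pa Pc.
have : affmul (a, 0) (c, 0) = (a * c, 0) by rewrite /affmul /= mulr0 addr0.
by move/(congr1 phi); rewrite phi_morph // /affmul /aut_diag => <-.
Qed.

Lemma aut_transl1_neq0 : aut_transl 1 != 0.
Proof.
apply/eqP => mu1_eq0.
have := @phi_inj (1, 1) (1, 0) P1 P1.
rewrite aut_translE aut_unit mu1_eq0 => /(_ erefl) [].
by apply/eqP; rewrite oner_eq0.
Qed.

Lemma aut_diag_id a : P a -> aut_diag a = a.
Proof.
move=> Pa; pose F x := aut_transl x / aut_transl 1.
have F_diag x : P x -> F x = aut_diag x.
  by move=> Px; rewrite /F -[x in aut_transl x]mulr1 aut_translM // mulfK ?aut_transl1_neq0.
have Fpos (x : R) : 0 < x -> 0 < F x.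
  move=> x_gt0; have sx_gt0 : 0 < Num.sqrt x by rewrite sqrtr_gt0.
  have Psx := P_pos _ sx_gt0.
  have sqr_diag : aut_diag x = aut_diag (Num.sqrt x) ^+ 2.
    by rewrite expr2 -aut_diagM // -expr2 sqr_sqrtr // ltW.
  rewrite F_diag; last exact: P_pos.
  rewrite sqr_diag lt_def sqrf_eq0 sqr_ge0 andbT.
  exact: (phi_fst_neq0 (_, 0)).
have FD x y : F (x + y) = F x + F y by rewrite /F aut_translD mulrDl.
have F1 : F 1 = 1 by rewrite /F divff ?aut_transl1_neq0.
by rewrite -F_diag // (additive_pos_eq_id _ _ FD F1 Fpos).
Qed.

Lemma aut_fst g : P g.1 -> (phi g).1 = g.1.
Proof.
move=> Pg.
have -> : g = affmul (1, g.2) (g.1, 0).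
  by rewrite /affmul /= mul1r mulr0 add0r -surjective_pairing.
rewrite phi_morph //= aut_translE /= !mul1r.
exact: aut_diag_id.
Qed.

Lemma twisted_rel_fst x y :
  twisted_rel [set p | P p.1] phi x y -> y.1 = x.1.
Proof.
case=> g Pg ->; rewrite /affmul /affinv /= aut_fst //.
by rewrite mulrAC divff ?mul1r ?P_neq0.
Qed.

Lemma twisted_rel_refl x : twisted_rel [set p | P p.1] phi x x.
Proof.
exists (1, 0) => //; rewrite aut_unit /affmul /affinv /=.
by rewrite !mul1r invr1 mulr1 mul0r oppr0 mulr0 !add0r addr0 -surjective_pairing.
Qed.

Lemma twisted_classes_infinite : infinite_set (twisted_classes [set p | P p.1] phi).
Proof.
pose S := [set p : R * R | P p.1].
pose cls (n : nat) := [set y | S y /\ twisted_rel S phi (n.+1%:R, 0) y].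
have Pn (n : nat) : P n.+1%:R by apply: P_pos.
apply/infiniteP/pcard_leP/injfunPex; exists cls.
  by move=> n _; exists (n.+1%:R, 0); [exact: Pn|].
move=> n m _ _ cls_nm.
have : cls m (n.+1%:R, 0) by rewrite -cls_nm; split; [exact: Pn | exact: twisted_rel_refl].
by case=> _ /twisted_rel_fst /= /eqP; rewrite eqr_nat => /eqP [].
Qed.

End AffineAutomorphism.

Lemma affine_top_R_infty (R : realType) (P : R -> Prop) :
  (forall a : R, 0 < a -> P a) -> (forall a : R, P a -> a != 0) ->
  top_R_infty [set p : R * R | P p.1].
Proof.
move=> P_pos P_neq0 phi [phi_stable [phi_morph [_ [psi [_ [psiK _]]]]]].
apply: twisted_classes_infinite => // x y Px Py e.
by rewrite -(psiK x Px) -(psiK y Py) e.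
Qed.

Theorem corollary5p2 (R : realType) :
  top_R_infty (@aff_full R) /\ top_R_infty (@aff_pos R).
Proof.
split; [apply: (@affine_top_R_infty R (fun a => a != 0)) |
        apply: (@affine_top_R_infty R (fun a => 0 < a))] => //.
- by move=> a a_gt0; rewrite gt_eqF.
- by move=> a a_gt0; rewrite gt_eqF.
Qed.
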